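(* Let $A=(a_{ij})$ be the adjacency matrix of a graph on $[n]$ ($a_{ii}=0$), $Z_1,\dots,Z_n\in\mathbb R^{d_n}$, and let the LG-GNN quantities be $\lambda_i^0=\frac1{\sqrt{n-1}}\sum_\ell a_{i\ell}Z_\ell$, $\lambda_i^k=\lambda_i^{k-1}+\frac1{n-1}\sum_\ell a_{i\ell}\lambda_\ell^{k-1}$ ($k=1,\dots,L$), $\hat q_{i,j}^{(2)}=\langle\lambda_i^0,\lambda_j^0\rangle$ and $\hat q_{i,j}^{(k)}=\langle\lambda_i^{k-2},\lambda_j^0\rangle-\sum_{r=0}^{k-3}\binom{k-2}r\hat q_{i,j}^{(r+2)}$ for $3\le k\le L+2$. Then for all $2\le k\le L+2$, $$\hat q_{i,j}^{(k)}=\Big\langle\frac1{\sqrt{n-1}}\sum_{\ell\le n}a_{j\ell}Z_\ell,\ \frac1{\sqrt{n-1}}\sum_{\ell\le n}\hat W_{n,i,\ell}^{(k-1)}Z_\ell\Big\rangle.$$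
   Context: Empirical moment: $\hat W_{n,i,j}^{(k)}=\frac1{(n-1)^{k-1}}\sum_{r_1,\dots,r_{k-1}\le n}a_{ir_1}a_{r_1r_2}\cdots a_{r_{k-1}j}$, so $\hat W^{(1)}_{n,i,j}=a_{ij}$. *)

From HB Require Import structures.
From mathcomp Require Import all_boot all_order all_algebra.
Set Implicit Arguments. Unset Strict Implicit. Unset Printing Implicit Defensive.
Import Order.TTheory GRing.Theory Num.Theory.
Local Open Scope ring_scope.

Section LGGNN.
Variables (R : rcfType) (n d : nat).

Definition dotv (u v : 'rV[R]_d) : R := \sum_(t < d) u 0 t * v 0 t.

Definition adjacency (A : 'M[R]_n) : Prop :=
  (forall i j, A i j = 0 \/ A i j = 1) /\ (forall i j, A i j = A j i) /\
  (forall i, A i i = 0).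

Fixpoint lam (A : 'M[R]_n) (Z : 'I_n -> 'rV[R]_d) (k : nat) (i : 'I_n) : 'rV[R]_d :=
  match k with
  | 0 => (Num.sqrt (n.-1)%:R)^-1 *: \sum_(l < n) A i l *: Z l
  | k'.+1 => lam A Z k' i + ((n.-1)%:R)^-1 *: \sum_(l < n) A i l *: lam A Z k' l
  end.

(* qseq m = [:: qhat^(2); ...; qhat^(m+2)] *)
Fixpoint qseq (A : 'M[R]_n) (Z : 'I_n -> 'rV[R]_d) (i j : 'I_n) (m : nat) : seq R :=
  match m with
  | 0 => [:: dotv (lam A Z 0 i) (lam A Z 0 j)]
  | m'.+1 => let s := qseq A Z i j m' in
      rcons s (dotv (lam A Z m'.+1 i) (lam A Z 0 j)
               - \sum_(r < m'.+1) 'C(m'.+1, r)%:R * nth 0 s r)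
  end.

(* qhat^(k)_{i,j}, meaningful for k >= 2 *)
Definition qhat A Z (k : nat) (i j : 'I_n) : R := nth 0 (qseq A Z i j (k - 2)) (k - 2).

Fixpoint wsum (A : 'M[R]_n) (k : nat) (i j : 'I_n) : R :=
  match k with
  | 0 => 0
  | 1 => A i j
  | k'.+1 => \sum_(r < n) wsum A k' i r * A r j
  end.

Definition What (A : 'M[R]_n) (k : nat) (i j : 'I_n) : R :=
  wsum A k i j / ((n.-1)%:R ^+ k.-1).

End LGGNN.

From HB Require Import structures.
From mathcomp Require Import all_boot all_order all_algebra.
From mathcomp Require Import ring.
Set Implicit Arguments. Unset Strict Implicit. Unset Printing Implicit Defensive.
Import Order.TTheory GRing.Theory Num.Theory.
Local Open Scope ring_scope.

(* With [P] the aggregation step [aggregate], the LG-GNN recursion reads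
   [lambda^k = (1 + P)^k lambda^0], while [P^r lambda^0 = moment r] carries the
   empirical moment [W^(r+1)].  Hence [lambda^k = sum_r C(k,r) moment r], and the
   recursion defining [qhat^(k+2)] subtracts exactly the terms [r < k] of
   [<lambda^k_i, lambda^0_j>], leaving [<moment k i, lambda^0_j>]. *)

Section InnerProduct.
Variables (R : rcfType) (d : nat).

Lemma dotvC (u v : 'rV[R]_d) : dotv u v = dotv v u.
Proof. by apply: eq_bigr => t _; rewrite mulrC. Qed.

Lemma dotv_suml m (c : 'I_m -> R) (u : 'I_m -> 'rV[R]_d) v :
  dotv (\sum_(r < m) c r *: u r) v = \sum_(r < m) c r * dotv (u r) v.
Proof.
rewrite /dotv; under eq_bigr => t _ do rewrite summxE big_distrl.
rewrite exchange_big; apply: eq_bigr => r _ /=.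
by rewrite mulr_sumr; apply: eq_bigr => t _; rewrite mxE mulrA.
Qed.

End InnerProduct.

Section Moments.
Variables (R : rcfType) (n d : nat) (A : 'M[R]_n) (Z : 'I_n -> 'rV[R]_d).

Lemma wsumSl k (i j : 'I_n) :
  wsum A k.+2 i j = \sum_(l < n) A i l * wsum A k.+1 l j.
Proof.
elim: k i j => [|k IHk] i j //.
rewrite -[LHS]/(\sum_(r < n) wsum A k.+2 i r * A r j).
under eq_bigr => r _ do rewrite IHk big_distrl /=.
rewrite exchange_big /=; apply: eq_bigr => l _.
by rewrite big_distrr /=; apply: eq_bigr => r _; rewrite mulrA.
Qed.

Lemma WhatSl k (i j : 'I_n) :
  What A k.+2 i j = (n.-1)%:R^-1 * \sum_(l < n) A i l * What A k.+1 l j.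
Proof.
rewrite /What wsumSl mulr_suml mulr_sumr; apply: eq_bigr => l _ /=.
by rewrite exprS invfM; ring.
Qed.

Definition aggregate (v : 'I_n -> 'rV[R]_d) (i : 'I_n) : 'rV[R]_d :=
  (n.-1)%:R^-1 *: \sum_(l < n) A i l *: v l.

Lemma eq_aggregate {v w : 'I_n -> 'rV[R]_d} :
  v =1 w -> aggregate v =1 aggregate w.
Proof. by move=> eq_vw i; congr (_ *: _); apply: eq_bigr => l _; rewrite eq_vw. Qed.

Lemma aggregate_sum m (c : 'I_m -> R) (v : 'I_m -> 'I_n -> 'rV[R]_d) i :
  aggregate (fun l => \sum_(r < m) c r *: v r l) i
  = \sum_(r < m) c r *: aggregate (v r) i.
Proof.
rewrite /aggregate; under eq_bigr => l _ do rewrite scaler_sumr.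
rewrite exchange_big scaler_sumr; apply: eq_bigr => r _ /=.
rewrite !scaler_sumr; apply: eq_bigr => l _.
by rewrite !scalerA; congr (_ *: _); ring.
Qed.

Lemma lamS k i : lam A Z k.+1 i = lam A Z k i + aggregate (lam A Z k) i.
Proof. by []. Qed.

Definition moment (r : nat) (i : 'I_n) : 'rV[R]_d :=
  (Num.sqrt (n.-1)%:R)^-1 *: \sum_(l < n) What A r.+1 i l *: Z l.

Lemma moment0 i : moment 0 i = lam A Z 0 i.
Proof.
rewrite /moment /=; congr (_ *: _); apply: eq_bigr => l _.
by rewrite /What expr0 invr1 mulr1.
Qed.

Lemma aggregate_moment r i : aggregate (moment r) i = moment r.+1 i.
Proof.
rewrite /aggregate /moment.
under eq_bigr => l _ do rewrite scalerA mulrC -scalerA scaler_sumr.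
rewrite -scaler_sumr scalerA mulrC -scalerA; congr (_ *: _).
rewrite exchange_big scaler_sumr; apply: eq_bigr => m _ /=.
under eq_bigr => l _ do rewrite scalerA.
by rewrite -scaler_suml scalerA -WhatSl.
Qed.

Lemma lam_binomial k i :
  lam A Z k i = \sum_(r < k.+1) 'C(k, r)%:R *: moment r i.
Proof.
elim: k i => [|k IHk] i; first by rewrite big_ord1 bin0 scale1r moment0.
rewrite lamS.
have -> : aggregate (lam A Z k) i
          = \sum_(r < k.+1) 'C(k, r)%:R *: moment r.+1 i.
  rewrite (eq_aggregate IHk) aggregate_sum.
  by apply: eq_bigr => r _; rewrite aggregate_moment.
rewrite IHk big_ord_recl [RHS]big_ord_recl !bin0.
under [in RHS]eq_bigr => r _ do rewrite binS natrD scalerDl.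
rewrite big_split /= addrA; congr (_ + _).
by rewrite big_ord_recr /= bin_small // scale0r addr0.
Qed.

End Moments.

Section Qhat.
Variables (R : rcfType) (n d : nat) (A : 'M[R]_n) (Z : 'I_n -> 'rV[R]_d).
Variables (i j : 'I_n).

Lemma qseqS m : qseq A Z i j m.+1 = rcons (qseq A Z i j m)
  (dotv (lam A Z m.+1 i) (lam A Z 0 j)
   - \sum_(r < m.+1) 'C(m.+1, r)%:R * nth 0 (qseq A Z i j m) r).
Proof. by []. Qed.

Lemma size_qseq m : size (qseq A Z i j m) = m.+1.
Proof. by elim: m => [|m IHm] //; rewrite qseqS size_rcons IHm. Qed.

Lemma nth_qseq m r : (r <= m)%N ->
  nth 0 (qseq A Z i j m) r = nth 0 (qseq A Z i j r) r.
Proof.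
elim: m => [|m IHm]; first by rewrite leqn0 => /eqP ->.
rewrite leq_eqVlt => /predU1P [-> // | ltrm].
by rewrite qseqS nth_rcons size_qseq ltrm IHm.
Qed.

Lemma nth_qseq_moment m :
  nth 0 (qseq A Z i j m) m = dotv (moment A Z m i) (lam A Z 0 j).
Proof.
elim/ltn_ind: m => -[|m] IHm; first by rewrite /= moment0.
rewrite qseqS nth_rcons size_qseq ltnn eqxx.
rewrite lam_binomial dotv_suml big_ord_recr /= binn mul1r.
under [X in _ - X]eq_bigr => r _ do
  rewrite (nth_qseq (m := m) (ltn_ord r)) (IHm _ (ltn_ord r)).
by rewrite addrC addrK.
Qed.

End Qhat.

Theorem lemmaD5 (R : rcfType) (n d L : nat) (A : 'M[R]_n)
  (Z : 'I_n -> 'rV[R]_d) (hA : adjacency A) (k : nat)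
  (hk2 : (2 <= k)%N) (hkL : (k <= L + 2)%N) (i j : 'I_n) :
  qhat A Z k i j =
  dotv ((Num.sqrt (n.-1)%:R)^-1 *: \sum_(l < n) A j l *: Z l)
       ((Num.sqrt (n.-1)%:R)^-1 *: \sum_(l < n) What A k.-1 i l *: Z l).
Proof.
have -> : k.-1 = (k - 2).+1 by case: k hk2 {hkL} => [|[|k]] //= _; rewrite subn2.
by rewrite /qhat nth_qseq_moment dotvC.
Qed.
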